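(* Let $\rho$ be an indecomposable representation of $D^{2,2,2}$, and for $a\in D^{2,2,2}$ write $$S(a)=\sum_{p=1}^3\varphi_p(\Phi^+\rho(a))\subseteq X_0.$$ 1. If $v_1,v_2,v_3\in D^{2,2,2}$ are perfect, then $S(v_1v_2v_3)=S(v_1)\cap S(v_2)\cap S(v_3)$. 2. If $v$ is perfect and $u\in D^{2,2,2}$ is arbitrary, then $S(vu)=S(v)\cap S(u)$.
   Context: $D^{2,2,2}$ is the modular lattice generated by $x_1,y_1,x_2,y_2,x_3,y_3$ subject only to $x_i\subseteq y_i$ ($i=1,2,3$), with a greatest element $I$ adjoined. Meet is written $ab$, join $a+b$. A representation $\rho$ of $D^{2,2,2}$ in a finite-dimensional vector space $X_0$ is a lattice morphism from $D^{2,2,2}$ to the subspace lattice of $X_0$, with $\rho(I)=X_0$. Write $X_i=\rho(x_i)\subseteq Y_i=\rho(y_i)$. $\rho$ is indecomposable if $X_0\neq0$ and there is no decomposition $X_0=X'\oplus X''$ with $X',X''\neq0$ and $\rho(a)=(\rho(a)\cap X')+(\rho(a)\cap X'')$ for all $a$. An element $a$ is perfect if $\rho(a)\in\{0,X_0\}$ for every indecomposable $\rho$. Put $R=Y_1\oplus Y_2\oplus Y_3$ and $X^1_0=\{(\eta_1,\eta_2,\eta_3)\in R:\sum\eta_i=0\}$. Let $G'_i\subseteq R$ be the triples with $i$-th coordinate in $X_i$, and $H'_i\subseteq R$ the triples with $i$-th coordinate $0$. $\Phi^+\rho$ is the representation in $X^1_0$ with $\Phi^+\rho(y_i)=G'_i\cap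 X^1_0$, $\Phi^+\rho(x_i)=H'_i\cap X^1_0$, $\Phi^+\rho(I)=X^1_0$. The elementary map $\varphi_p:X^1_0\to X_0$ is $(\eta_1,\eta_2,\eta_3)\mapsto\eta_p$; $\varphi_p(S)$ denotes the image of a subspace $S$. *)

From HB Require Import structures.
From mathcomp Require Import all_boot all_order all_algebra.
Set Implicit Arguments. Unset Strict Implicit. Unset Printing Implicit Defensive.
Import GRing.Theory.
Local Open Scope ring_scope.

(* Elements of D^{2,2,2} are represented by lattice terms over the six
   generators x_i, y_i (i : 'I_3) and the adjoined top I.  Since a
   representation is a lattice morphism determined by the images of the
   generators (subject to x_i <= y_i), the value of an element under any
   representation is the evaluation of any term representing it. *)
Inductive dterm : Type :=
  | Tx of 'I_3
  | Ty of 'I_3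
  | TI
  | Tmeet of dterm & dterm
  | Tjoin of dterm & dterm.

Section Eval.
Variables (K : fieldType) (vT : vectType K).
Variables (top : {vspace vT}) (X Y : 'I_3 -> {vspace vT}).
Fixpoint deval (a : dterm) : {vspace vT} :=
  match a with
  | Tx i => X i
  | Ty i => Y i
  | TI => top
  | Tmeet a b => (deval a :&: deval b)%VS
  | Tjoin a b => (deval a + deval b)%VS
  end.
End Eval.

(* rho is a representation of D^{2,2,2} in X_0 = fullv *)
Definition is_rep (K : fieldType) (vT : vectType K) (X Y : 'I_3 -> {vspace vT}) :=
  forall i, (X i <= Y i)%VS.

Definition rho_eval (K : fieldType) (vT : vectType K) (X Y : 'I_3 -> {vspace vT})
  (a : dterm) : {vspace vT} := deval fullv X Y a.

Definition indecomposable (K : fieldType) (vT : vectType K)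
  (X Y : 'I_3 -> {vspace vT}) : Prop :=
  is_rep X Y /\ (fullv : {vspace vT}) != 0%VS /\
  ~ (exists X' X'' : {vspace vT},
        [/\ X' != 0%VS, X'' != 0%VS, directv (X' + X''),
            (X' + X'' = fullv)%VS &
            forall a, rho_eval X Y a
                      = (rho_eval X Y a :&: X' + rho_eval X Y a :&: X'')%VS]).

Definition perfect (K : fieldType) (a : dterm) : Prop :=
  forall (vT : vectType K) (X Y : 'I_3 -> {vspace vT}),
    indecomposable X Y ->
    rho_eval X Y a = 0%VS \/ rho_eval X Y a = fullv.

Section PhiPlus.
Variables (K : fieldType) (vT : vectType K).
Definition triple := (vT * vT * vT)%type.

Definition coord3 (p : 'I_3) (e : triple) : vT :=
  match val p with 0 => e.1.1 | 1 => e.1.2 | _ => e.2 end.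

Definition phi (p : 'I_3) : 'Hom(triple, vT) := linfun (coord3 p).

Definition sum3 : 'Hom(triple, vT) := linfun (fun e : triple => e.1.1 + e.1.2 + e.2).

Variables (X Y : 'I_3 -> {vspace vT}).

Definition Rsp : {vspace triple} := (\bigcap_(j < 3) (phi j @^-1: Y j))%VS.
Definition X01 : {vspace triple} := (Rsp :&: lker sum3)%VS.
Definition Gp (i : 'I_3) : {vspace triple} := (Rsp :&: (phi i @^-1: X i))%VS.
Definition Hp (i : 'I_3) : {vspace triple} := (Rsp :&: lker (phi i))%VS.

Definition PhiPlus_eval (a : dterm) : {vspace triple} :=
  deval X01 (fun i => Hp i :&: X01)%VS (fun i => Gp i :&: X01)%VS a.

Definition Ssp (a : dterm) : {vspace vT} :=
  (\sum_(p < 3) (phi p @: PhiPlus_eval a))%VS.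
End PhiPlus.

From HB Require Import structures.
From mathcomp Require Import all_boot all_order all_algebra zify.
From Stdlib Require Import Classical.
Set Implicit Arguments. Unset Strict Implicit. Unset Printing Implicit Defensive.
Import GRing.Theory.
Local Open Scope ring_scope.
Local Open Scope vspace_scope.

(* Perfectness of v passes to the representation Phi^+ rho: splitting Phi^+ rho into
   indecomposable summands, v evaluates on each summand to 0 or to the whole summand,
   so Phi^+ rho(v) has a complement D in X_0^1 such that every Phi^+ rho(a) is the sum
   of its intersections with Phi^+ rho(v) and with D.  Since Phi^+ rho(x_p) consists of
   the triples with vanishing p-th coordinate, this compatibility forces
   S(Phi^+ rho(v)) :&: S(D) = 0, where S(U) = sum_p phi_p(U).  As S is additive,
   S(vu) = S(v) :&: S(u) follows, and the triple meet is two applications of it. *)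

Section VspaceLattice.
Variables (K : fieldType) (vT : vectType K).
Implicit Types A B C U V W : {vspace vT}.

Lemma addv_modl A B C : (A <= C) -> A + B :&: C = (A + B) :&: C.
Proof.
move=> sAC; apply/eqP; rewrite eqEsubv; apply/andP; split.
  by rewrite subv_cap addvS ?capvSl //= subv_add sAC capvSr.
apply/subvP => _ /memv_capP[/memv_addP[a Aa [b Bb ->]] abC].
rewrite memv_add // memv_cap Bb -(addKr a b) memvD ?memvN //.
exact: subvP sAC a Aa.
Qed.

Lemma addvACA A B C (D : {vspace vT}) : A + B + (C + D) = A + C + (B + D).
Proof. by rewrite -!addvA; congr (A + _); rewrite !addvA (addvC B). Qed.

Lemma capvIIl A B C : A :&: B :&: C = A :&: C :&: (B :&: C).
Proof. by symmetry; rewrite capvA -(capvA A C) (capvC C) capvA -capvA capvv. Qed.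

Lemma capv_eq0_dim U V : U :&: V = 0 <-> \dim (U + V) = (\dim U + \dim V)%N.
Proof.
have sum_cap := dimv_sum_cap U V.
split=> [UV0 | dimUV]; first by rewrite UV0 dimv0 in sum_cap; lia.
by apply/eqP; rewrite -dimv_eq0; apply/eqP; lia.
Qed.

Lemma capv_add_compl A B C C' : C :&: C' = 0 ->
  A = A :&: C + A :&: C' -> B = B :&: C + B :&: C' ->
  (A + B) :&: C = A :&: C + B :&: C.
Proof.
move=> CC'0 defA defB.
rewrite {1}defA {1}defB addvACA -addv_modl ?subv_add ?capvSr //.
suff -> : (A :&: C' + B :&: C') :&: C = 0 by rewrite addv0.
apply/eqP; rewrite -subv0 -CC'0 capvC capvS //.
by rewrite subv_add !capvSr.
Qed.

Lemma memv_add_component A U V W u v : U :&: V = 0 ->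
  (A :&: W <= A :&: U + A :&: V) ->
  u \in U -> v \in V -> (u + v)%R \in A :&: W -> u \in A.
Proof.
move=> UV0 splitA Uu Vv /(subvP splitA)/memv_addP[a /memv_capP[Aa Ua]].
case=> b /memv_capP[_ Vb] uv_ab.
have /directv_add_unique uniq : directv (U + V) by apply/directv_addP.
by move: uv_ab => /eqP; rewrite uniq // => /eqP[-> _].
Qed.

End VspaceLattice.

Lemma addv_morph_capv (K : fieldType) (aT rT : vectType K)
    (F : {vspace aT} -> {vspace rT}) (V D A : {vspace aT}) :
    {morph F : U W / U + W} -> F V :&: F D = 0 ->
    A = A :&: V + A :&: D -> F (A :&: V) = F V :&: F A.
Proof.
move=> FD FVD0 splitA.
have FS U W : (U <= W) -> (F U <= F W).
  by move=> /addv_idPr <-; rewrite FD addvSl.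
apply/eqP; rewrite eqEsubv subv_cap !FS ?capvSl ?capvSr //=.
apply/subvP => w /memv_capP[FVw]; rewrite {1}splitA FD.
case/memv_addP => w1 FAVw1 [w2 FADw2 def_w].
have FVw1 : w1 \in F V := subvP (FS _ _ (capvSr _ _)) w1 FAVw1.
suff w2_0 : w2 = 0%R by rewrite def_w w2_0 addr0.
apply/eqP; rewrite -memv0 -FVD0 memv_cap (subvP (FS _ _ (capvSr A D)) _ FADw2) andbT.
by rewrite -(addKr w1 w2) -def_w memvD ?memvN.
Qed.

Section Splitting.
Variables (K : fieldType) (wT : vectType K).
Variables (top : {vspace wT}) (Xs Ys : 'I_3 -> {vspace wT}).
Local Notation P := (deval top Xs Ys).
Implicit Types U V W : {vspace wT}.

Definition splits W U V := [/\ U :&: V = 0, U + V = W &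
  forall a, (P a :&: W <= P a :&: U + P a :&: V)].

Lemma splits_capv W U V a : splits W U V ->
  P a :&: W = P a :&: U + P a :&: V.
Proof.
case=> _ <- splitP; apply/eqP; rewrite eqEsubv splitP.
by rewrite subv_add !capvS ?addvSl ?addvSr.
Qed.

Lemma splits_dim W U V : splits W U V -> \dim W = (\dim U + \dim V)%N.
Proof. by case=> /capv_eq0_dim <- ->. Qed.

Lemma splits_sym W U V : splits W U V -> splits W V U.
Proof.
case=> UV0 UVW splitP.
by split=> [|| a]; [rewrite capvC | rewrite addvC | rewrite addvC splitP].
Qed.

Lemma splits0r W : splits W W 0.
Proof. by split=> [|| a]; rewrite ?capv0 ?addv0. Qed.

Lemma splits0l W : splits W 0 W.
Proof. exact/splits_sym/splits0r. Qed.

Lemma splits_refine W U V U1 U2 :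
  splits W U V -> splits U U1 U2 -> splits W U1 (U2 + V).
Proof.
move=> sUV sU12; have [_ UVW splitW] := sUV; have [_ U12U splitU] := sU12.
split=> [|| a].
- apply/capv_eq0_dim; move: (splits_dim sUV) (splits_dim sU12).
  have := dimv_sum_cap U2 V; have := dimv_sum_cap U1 (U2 + V).
  rewrite addvA U12U UVW; lia.
- by rewrite addvA U12U.
- rewrite (splits_capv _ sUV) (splits_capv _ sU12) -addvA addvS //.
  by rewrite subv_add !capvS ?addvSl ?addvSr.
Qed.

Lemma splits_add W W1 W2 U1 V1 U2 V2 : splits W W1 W2 ->
  splits W1 U1 V1 -> splits W2 U2 V2 -> splits W (U1 + U2) (V1 + V2).
Proof.
move=> sW s1 s2; have [_ W12W _] := sW; have [_ UV1 _] := s1; have [_ UV2 _] := s2.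
split=> [|| a].
- apply/capv_eq0_dim; move: (splits_dim sW) (splits_dim s1) (splits_dim s2).
  have := dimv_sum_cap U1 U2; have := dimv_sum_cap V1 V2.
  have := dimv_sum_cap (U1 + U2) (V1 + V2).
  rewrite addvACA UV1 UV2 W12W; lia.
- by rewrite addvACA UV1 UV2.
- rewrite (splits_capv _ sW) (splits_capv _ s1) (splits_capv _ s2) addvACA.
  by rewrite addvS // subv_add !capvS ?addvSl ?addvSr.
Qed.

End Splitting.

Section Restriction.
Variables (K : fieldType) (wT : vectType K).
Variables (top : {vspace wT}) (Xs Ys : 'I_3 -> {vspace wT}).
Hypotheses (sXY : forall i, (Xs i <= Ys i)) (sYtop : forall i, (Ys i <= top)).
Local Notation P := (deval top Xs Ys).
Local Notation splits := (splits top Xs Ys).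

Lemma deval_sub a : (P a <= top).
Proof.
elim: a => [i|i||a IHa b IHb|a IHa b IHb] //=.
- exact: subv_trans (sXY i) (sYtop i).
- exact: subv_trans (capvSl _ _) IHa.
- by rewrite subv_add IHa IHb.
Qed.

Section Summand.
Variables (C C' : {vspace wT}).
Hypothesis sCC' : splits top C C'.

Lemma capv_devalD a b : (P a + P b) :&: C = P a :&: C + P b :&: C.
Proof.
have [CC'0 _ _] := sCC'.
have splitP c : P c = P c :&: C + P c :&: C'.
  by rewrite -(splits_capv _ sCC'); apply/esym/capv_idPl/deval_sub.
exact: capv_add_compl CC'0 (splitP a) (splitP b).
Qed.

Definition incl : 'Hom(subvs_of C, wT) := linfun vsval.

Lemma inclE u : incl u = vsval u.
Proof. by rewrite lfunE. Qed.

Lemma incl_ker0 : lker incl == 0.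
Proof. by apply/lker0P => u u'; rewrite !inclE; apply: subvs_inj. Qed.

Lemma limg_incl : limg incl = C.
Proof.
apply/eqP; rewrite eqEsubv; apply/andP; split; apply/subvP => x.
  by case/memv_imgP => u _ ->; rewrite inclE subvsP.
by move=> Cx; rewrite -(vsprojK Cx) -inclE memv_img ?memvf.
Qed.

(* The restriction to the summand C, moved to the space subvs_of C because [perfect]
   only speaks of representations on a full space. *)
Definition Xr i := incl @^-1: (Xs i :&: C).
Definition Yr i := incl @^-1: (Ys i :&: C).

Lemma limg_restrict a : incl @: rho_eval Xr Yr a = P a :&: C.
Proof.
elim: a => [i|i||a IHa b IHb|a IHa b IHb] /=.
- by rewrite lpreimK // limg_incl capvSr.
- by rewrite lpreimK // limg_incl capvSr.
- by rewrite limg_incl; apply/esym/capv_idPr; case: sCC' => _ <- _; apply: addvSl.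
- by rewrite lker0_img_cap ?incl_ker0 // IHa IHb -capvIIl.
- by rewrite limgD IHa IHb capv_devalD.
Qed.

Lemma restrict_is_rep : is_rep Xr Yr.
Proof. by move=> i; rewrite lpreimS ?capvS. Qed.

Lemma restrict_decomposition : C != 0 -> ~ indecomposable Xr Yr ->
  exists C1 C2, [/\ C1 != 0, C2 != 0 & splits C C1 C2].
Proof.
move=> nzC notindec.
have limg_eq0 U : (incl @: U == 0) = (U == 0).
  by rewrite -!subv0 -(limg0 incl) limg_ker0 ?incl_ker0.
have [X1 [X2 [nzX1 nzX2 dX12 X12 splitX]]] : exists X1 X2 : {vspace subvs_of C},
    [/\ X1 != 0, X2 != 0, directv (X1 + X2), X1 + X2 = fullv &
        forall a, rho_eval Xr Yr a = rho_eval Xr Yr a :&: X1 + rho_eval Xr Yr a :&: X2].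
  apply: NNPP => nodec; apply: notindec; split; [exact: restrict_is_rep | split=> //].
  by rewrite -limg_eq0 limg_incl.
exists (incl @: X1), (incl @: X2); split; rewrite ?limg_eq0 //; split=> [|| a].
- by rewrite -lker0_img_cap ?incl_ker0 // (directv_addP dX12) limg0.
- by rewrite -limgD X12 limg_incl.
- rewrite -limg_restrict {1}splitX limgD !lker0_img_cap ?incl_ker0 //.
  by rewrite !limg_restrict addvS ?capvS ?capvSl.
Qed.

Lemma restrict_dichotomy v : perfect K v ->
  (exists C1 C2, [/\ C1 != 0, C2 != 0 & splits C C1 C2]) \/
  P v :&: C = 0 \/ P v :&: C = C.
Proof.
move=> perfect_v; have [/eqP-> | nzC] := boolP (C == 0).
  by right; left; rewrite capv0.
have [indec | ] := classic (indecomposable Xr Yr); last first.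
  by left; apply: restrict_decomposition.
right; rewrite -limg_restrict.
by case: (perfect_v _ _ _ indec) => ->; [left; apply: limg0 | right; apply: limg_incl].
Qed.

End Summand.

Lemma perfect_splits v : perfect K v ->
  forall C C', splits top C C' -> exists D, splits C (P v :&: C) D.
Proof.
move=> perfect_v C C'; have [n] := ubnP (\dim C).
elim: n C C' => // n IH C C' ltCn sCC'.
have [[C1 [C2 [nzC1 nzC2 sC12]]] | [PvC0 | PvCC]] := restrict_dichotomy sCC' perfect_v.
- have := splits_dim sC12; rewrite -!dimv_eq0 in nzC1 nzC2 => dimC.
  have [D1 sD1] := IH C1 (C2 + C') ltac:(lia) (splits_refine sCC' sC12).
  have [D2 sD2] := IH C2 (C1 + C') ltac:(lia) (splits_refine sCC' (splits_sym sC12)).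
  by exists (D1 + D2); rewrite (splits_capv _ sC12); apply: splits_add sC12 sD1 sD2.
- by exists C; rewrite PvC0; apply: splits0l.
- by exists 0; rewrite PvCC; apply: splits0r.
Qed.

Lemma perfect_complement v : perfect K v -> exists D, splits top (P v) D.
Proof.
move=> perfect_v; have [D] := perfect_splits perfect_v (splits0r top Xs Ys top).
by rewrite (capv_idPl (deval_sub v)); exists D.
Qed.

End Restriction.

Section Coordinates.
Variables (K : fieldType) (vT : vectType K).

Lemma coord3_is_linear (p : 'I_3) : linear (@coord3 K vT p).
Proof. by move=> k e e'; rewrite /coord3; case: (val p) => [|[|n]]. Qed.
HB.instance Definition _ p :=
  GRing.isLinear.Build K (triple vT) vT _ (@coord3 K vT p) (coord3_is_linear p).

Lemma phiE p e : phi vT p e = coord3 p e.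
Proof. by rewrite lfunE. Qed.

(* The body of [sum3], named so that it can carry the linear structure [lfunE] needs. *)
Definition sum3_fun (e : triple vT) : vT := e.1.1 + e.1.2 + e.2.

Lemma sum3_fun_is_linear : linear sum3_fun.
Proof.
move=> k e e'; rewrite /sum3_fun /= !scalerDr.
by rewrite [in RHS]addrACA [X in (X + _)%R]addrACA addrA.
Qed.
HB.instance Definition _ :=
  GRing.isLinear.Build K (triple vT) vT _ sum3_fun sum3_fun_is_linear.

Lemma sum3_coord3 e : sum3 vT e = (\sum_(p < 3) coord3 p e)%R.
Proof. by rewrite (lfunE (sum3_fun : {linear _ -> _})) !big_ord_recr big_ord0 /= add0r. Qed.

Definition triple_of (f : 'I_3 -> vT) : triple vT := (f ord0, f (inord 1), f (inord 2)).

Lemma coord3_triple_of f p : coord3 p (triple_of f) = f p.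
Proof.
by case: p => [[|[|[|m]]] lt_p3] //; congr f; apply: val_inj; rewrite /= ?inordK.
Qed.

End Coordinates.

Section PhiPlusRep.
Variables (K : fieldType) (vT : vectType K) (X Y : 'I_3 -> {vspace vT}).
Local Notation P := (PhiPlus_eval X Y).
Local Notation W0 := (X01 Y).
Local Notation Xs i := (Hp Y i :&: X01 Y).
Local Notation Ys i := (Gp X Y i :&: X01 Y).
Local Notation splits := (splits W0 (fun i => Xs i) (fun i => Ys i)).

Lemma Hp_sub_Gp i : (Xs i <= Ys i).
Proof. by rewrite capvS // capvS // -lpreim0 lpreimS ?sub0v. Qed.

Lemma PhiPlus_sub a : (P a <= W0).
Proof. exact: deval_sub Hp_sub_Gp (fun i => capvSr _ _) a. Qed.

Lemma PhiPlus_complement v : perfect K v -> exists D, splits W0 (P v) D.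
Proof. exact: perfect_complement Hp_sub_Gp (fun i => capvSr _ _) v. Qed.

Lemma memv_RspP e : reflect (forall p, coord3 p e \in Y p) (e \in Rsp Y).
Proof.
rewrite memvE; apply: (iffP subv_bigcapP) => Re p; last first.
  by move=> _; rewrite -memvE -memv_preim phiE.
by move: (Re p isT); rewrite -memvE -memv_preim phiE.
Qed.

Lemma limg_phi_sub p U : (U <= W0) -> (phi vT p @: U <= Y p).
Proof.
move=> sUW0; apply/subvP => _ /memv_imgP[e /(subvP sUW0)/memv_capP[/memv_RspP Re _] ->].
by rewrite phiE.
Qed.

Definition phi_span (U : {vspace triple vT}) := \sum_(p < 3) phi vT p @: U.

Lemma phi_span_addv : {morph phi_span : U W / U + W}.
Proof. by move=> U W; rewrite /phi_span -big_split; apply: eq_bigr => p _; apply: limgD. Qed.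

Section Complement.
Variables (V D : {vspace triple vT}).
Hypothesis sVD : splits W0 V D.

(* Compatibility of V + D with Phi^+ rho(x_p): the V-component of a triple of X_0^1
   with vanishing p-th coordinate again has vanishing p-th coordinate. *)
Lemma coord3_component p s t x y : s \in phi vT p @: V ->
  t \in phi vT p @: D -> x \in V -> y \in D ->
  coord3 p (x + y)%R = (s - t)%R -> s = coord3 p x.
Proof.
case/memv_imgP=> a Va ->; case/memv_imgP=> b Db ->; rewrite !phiE => Vx Dy xy_ab.
have [VD0 VDW0 splitP] := sVD.
have sVW0 : (V <= W0) by rewrite -VDW0 addvSl.
have sDW0 : (D <= W0) by rewrite -VDW0 addvSr.
suff : (a - x)%R \in P (Tx p).
  rewrite /= memv_cap => /andP[/memv_capP[_]].
  by rewrite memv_ker phiE linearB subr_eq0 => /eqP.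
have W0a := subvP sVW0 a Va; have W0x := subvP sVW0 x Vx.
have W0b := subvP sDW0 b Db; have W0y := subvP sDW0 y Dy.
apply: (memv_add_component (v := - (b + y))%R VD0 (splitP (Tx p)));
  [exact: memvB | by rewrite memvN memvD |].
have W0_diff : (a - x - (b + y))%R \in W0 by rewrite !memvB ?memvD.
rewrite /= -capvA capvv memv_cap W0_diff andbT.
rewrite memv_cap (subvP (capvSl _ _) _ W0_diff) /=.
rewrite memv_ker phiE (_ : a - x - (b + y) = a - b - (x + y))%R; last by rewrite !opprD addrACA.
by rewrite linearB /= xy_ab linearB subrr.
Qed.

Lemma phi_span_capv_eq0 : phi_span V :&: phi_span D = 0.
Proof.
apply/eqP; rewrite -subv0; apply/subvP => w /memv_capP[].
case/memv_sumP => s Vs ->; case/memv_sumP => t Dt st; rewrite memv0.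
have [_ VDW0 _] := sVD.
pose xi := triple_of (fun p => s p - t p)%R.
have sVW0 : (V <= W0) by rewrite -VDW0 addvSl.
have sDW0 : (D <= W0) by rewrite -VDW0 addvSr.
have W0xi : xi \in W0.
  rewrite memv_cap memv_ker sum3_coord3; apply/andP; split.
    apply/memv_RspP => p; rewrite coord3_triple_of.
    by rewrite memvB ?(subvP (limg_phi_sub p sVW0) _ (Vs p isT))
                     ?(subvP (limg_phi_sub p sDW0) _ (Dt p isT)).
  under eq_bigr do rewrite coord3_triple_of.
  by rewrite sumrB st subrr.
move: W0xi; rewrite -VDW0 => /memv_addP[x Vx [y Dy xi_xy]].
have s_x p : s p = coord3 p x.
  by apply: coord3_component (Vs p isT) (Dt p isT) Vx Dy _; rewrite -xi_xy coord3_triple_of.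
rewrite (eq_bigr _ (fun p _ => s_x p)) -sum3_coord3 -memv_ker.
exact: subvP (capvSr _ _) x (subvP sVW0 x Vx).
Qed.

End Complement.

Lemma Ssp_meet_perfect v u : perfect K v ->
  Ssp X Y (Tmeet v u) = Ssp X Y v :&: Ssp X Y u.
Proof.
case/PhiPlus_complement => D sVD.
change (phi_span (P v :&: P u) = phi_span (P v) :&: phi_span (P u)); rewrite capvC.
apply: addv_morph_capv phi_span_addv (phi_span_capv_eq0 sVD) _.
by rewrite -(splits_capv _ sVD); apply/esym/capv_idPl/PhiPlus_sub.
Qed.

End PhiPlusRep.

Theorem mainTheorem17 (K : fieldType) (vT : vectType K)
  (X Y : 'I_3 -> {vspace vT}) :
  indecomposable X Y ->
  (forall v1 v2 v3 : dterm, perfect K v1 -> perfect K v2 -> perfect K v3 ->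
     Ssp X Y (Tmeet (Tmeet v1 v2) v3)
     = (Ssp X Y v1 :&: Ssp X Y v2 :&: Ssp X Y v3)%VS) /\
  (forall v u : dterm, perfect K v ->
     Ssp X Y (Tmeet v u) = (Ssp X Y v :&: Ssp X Y u)%VS).
Proof.
move=> _; split=> [v1 v2 v3 perfect_v1 perfect_v2 perfect_v3 | v u]; last first.
  exact: Ssp_meet_perfect.
have -> : Ssp X Y (Tmeet (Tmeet v1 v2) v3) = Ssp X Y (Tmeet v3 (Tmeet v1 v2)).
  by rewrite /Ssp /= capvC.
by rewrite !Ssp_meet_perfect // capvC.
Qed.
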